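(* Let $\kappa$ be an infinite cardinal. The set $B=\{(A,\,A\cap C,\,C) : A,C\in\mathcal{F}(\kappa),\ A\sim C\}$ is a maximal Boolean sublattice of the lattice $S$; that is, $B$ is a bounded Boolean sublattice of $S$ and no complemented bounded sublattice $C$ of $S$ with $B\subsetneq C$ is Boolean.
   Context: $\mathcal{F}(\kappa)$ is the Boolean lattice of subsets $X\subseteq\kappa$ that are finite or cofinite (i.e. $\kappa\setminus X$ finite). For $A,C\in\mathcal{F}(\kappa)$, write $A\sim C$ if either both $A$ and $C$ are finite or both $\kappa\setminus A$ and $\kappa\setminus C$ are finite. For $(A,B,C)$ set $\mu(A,B,C)=(A\cap B)\cup(A\cap C)\cup(B\cap C)$. A triple $(A,B,C)$ is balanced if $A\cap B=A\cap C=B\cap C$. The lattice $S$ is the set of balanced triples $(A,B,C)\in\mathcal{F}(\kappa)^3$ such that $C\setminus\mu(A,B,C)$ is finite, ordered componentwise; its meet is componentwise intersection and its join is $(A,B,C)\vee(A',B',C')=(U_1\cup m,U_2\cup m,U_3\cup m)$ where $(U_1,U_2,U_3)=(A\cup A',B\cup B',C\cup C')$ and $m=\mu(U_1,U_2,U_3)$. Its bounds are $(\emptyset,\emptyset,\emptyset)$ and $(\kappa,\kappa,\kappa)$. *)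

From HB Require Import structures.
From mathcomp Require Import all_boot.
From mathcomp Require Import boolp classical_sets cardinality.
Unset Strict Implicit. Unset Printing Implicit Defensive.
Local Open Scope classical_set_scope.

Section FiniteCofinite.
Variable T : Type. (* the cardinal kappa, as a type *)

Definition inF (X : set T) : Prop := finite_set X \/ finite_set (~` X).

Definition simF (A C : set T) : Prop :=
  (finite_set A /\ finite_set C) \/ (finite_set (~` A) /\ finite_set (~` C)).

Definition mu (A B C : set T) : set T := (A `&` B) `|` (A `&` C) `|` (B `&` C).

Definition triple := (set T * set T * set T)%type.
Definition t1 (x : triple) := x.1.1.
Definition t2 (x : triple) := x.1.2.
Definition t3 (x : triple) := x.2.

Definition balanced (x : triple) : Prop :=
  t1 x `&` t2 x = t1 x `&` t3 x /\ t1 x `&` t3 x = t2 x `&` t3 x.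

Definition inS (x : triple) : Prop :=
  [/\ inF (t1 x), inF (t2 x), inF (t3 x), balanced x &
      finite_set (t3 x `\` mu (t1 x) (t2 x) (t3 x))].

Definition meetS (x y : triple) : triple :=
  (t1 x `&` t1 y, t2 x `&` t2 y, t3 x `&` t3 y).

Definition joinS (x y : triple) : triple :=
  let U1 := t1 x `|` t1 y in
  let U2 := t2 x `|` t2 y in
  let U3 := t3 x `|` t3 y in
  let m := mu U1 U2 U3 in
  (U1 `|` m, U2 `|` m, U3 `|` m).

Definition botS : triple := (set0, set0, set0).
Definition topS : triple := (setT, setT, setT).

Definition bounded_sublattice (L : set triple) : Prop :=
  [/\ L `<=` inS, L botS, L topS,
      (forall x y, L x -> L y -> L (meetS x y)) &
      (forall x y, L x -> L y -> L (joinS x y))].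

Definition complemented_in (L : set triple) : Prop :=
  forall x, L x -> exists2 y, L y & meetS x y = botS /\ joinS x y = topS.

Definition distributive_in (L : set triple) : Prop :=
  forall x y z, L x -> L y -> L z ->
    meetS x (joinS y z) = joinS (meetS x y) (meetS x z).

Definition boolean_in (L : set triple) : Prop :=
  distributive_in L /\ complemented_in L.

Definition Bset : set triple :=
  [set x | exists A C, [/\ inF A, inF C, simF A C & x = (A, A `&` C, C)]].

End FiniteCofinite.

(* On B the operations of S are componentwise, so B is a copy of the Boolean
   algebra of pairs (A, C) with A ~ C.  Conversely, in a distributive L
   containing B, distributing a triple over the top element
   ({t}, 0, 0) \/ (~{t}, ~{t}, kappa) shows that every triple of L has the form
   (A, A & C, C).  Its defining condition then says that C \ A is finite, so a
   triple with A finite and C cofinite would make kappa finite; with A cofinite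
   and C finite, its complement in L does the same. *)
From mathcomp Require Import all_boot.
From mathcomp Require Import boolp classical_sets cardinality.
Set Implicit Arguments.
Local Open Scope classical_set_scope.

Ltac set_tauto :=
  rewrite predeqE => ?; rewrite /setI /setU /setC /setD /set0 /setT /mkset /=;
  tauto.

Ltac unfold_triple := rewrite /meetS /joinS /mu /t1 /t2 /t3 /botS /topS /=.

Section FiniteCofinite.
Variable T : Type.
Implicit Types A C : set T.

Lemma inF_setC A : inF T A -> inF T (~` A).
Proof. by case=> fA; [right; rewrite setCK | left]. Qed.

Lemma inF_setI A C : inF T A -> inF T C -> inF T (A `&` C).
Proof.
case=> [fA|cA] [fC|cC].
- by left; apply: finite_setIl.
- by left; apply: finite_setIl.
- by left; apply: finite_setIr.
- by right; rewrite setCI finite_setU.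
Qed.

Lemma inF_setU A C : inF T A -> inF T C -> inF T (A `|` C).
Proof.
move=> hA hC; have := inF_setC (inF_setI (inF_setC hA) (inF_setC hC)).
by rewrite -setCU setCK.
Qed.

Lemma simF_setC A C : simF T A C -> simF T (~` A) (~` C).
Proof. by case=> [[fA fC]|cAC]; [right; rewrite !setCK | left]. Qed.

Lemma simF_setI A C A' C' :
  simF T A C -> simF T A' C' -> simF T (A `&` A') (C `&` C').
Proof.
case=> [[fA fC]|[cA cC]] [[fA' fC']|[cA' cC']].
- by left; split; apply: finite_setIl.
- by left; split; apply: finite_setIl.
- by left; split; apply: finite_setIr.
- by right; rewrite !setCI !finite_setU.
Qed.

Lemma simF_setU A C A' C' :
  simF T A C -> simF T A' C' -> simF T (A `|` A') (C `|` C').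
Proof.
move=> h h'; have := simF_setC (simF_setI (simF_setC h) (simF_setC h')).
by rewrite -!setCU !setCK.
Qed.

End FiniteCofinite.

Section LatticeS.
Variable T : Type.
Implicit Types A C : set T.

Lemma mu_setI_mid A C : mu T A (A `&` C) C = A `&` C.
Proof. by rewrite /mu; set_tauto. Qed.

Lemma meetS_topS x : meetS T x (topS T) = x.
Proof. by case: x => [[P Q] R]; rewrite /meetS /topS /t1 /t2 /t3 /= !setIT. Qed.

Lemma joinS_setC_topS A :
  joinS T (A, A `&` set0, set0) (~` A, ~` A `&` setT, setT) = topS T.
Proof. by unfold_triple; rewrite setUv set0U; congr (_, _, _); set_tauto. Qed.

Lemma joinS_t2_notin x y t : ~ t1 T x t -> ~ t2 T x t -> ~ t1 T y t ->
  ~ t2 T y t -> ~ t2 T (joinS T x y) t.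
Proof. by rewrite /joinS /mu /t1 /t2 /t3 /setU /setI /=; tauto. Qed.

End LatticeS.

Section BooleanB.
Variable T : Type.

Lemma Bset_inS : Bset T `<=` inS T.
Proof.
move=> _ [A [C [hA hC hAC ->]]]; rewrite /inS /t1 /t2 /t3 /=.
split=> //; first exact: inF_setI.
  by rewrite /balanced /t1 /t2 /t3 /=; split; set_tauto.
rewrite mu_setI_mid; case: hAC => [[_ fC]|[cA _]].
  by apply: sub_finite_set fC => t [].
by apply: sub_finite_set cA => t [Ct nACt] At; exact: nACt.
Qed.

Lemma Bset_botS : Bset T (botS T).
Proof. by exists set0, set0; rewrite setIid; split=> //; left. Qed.

Lemma Bset_topS : Bset T (topS T).
Proof.
by exists setT, setT; rewrite setIid; split=> //; right; rewrite ?setCT.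
Qed.

Lemma Bset_meetS x y : Bset T x -> Bset T y -> Bset T (meetS T x y).
Proof.
move=> [A [C [hA hC hAC ->]]] [A' [C' [hA' hC' hAC' ->]]].
exists (A `&` A'), (C `&` C').
split; [exact: inF_setI | exact: inF_setI | exact: simF_setI |].
by unfold_triple; congr (_, _, _); set_tauto.
Qed.

Lemma Bset_joinS x y : Bset T x -> Bset T y -> Bset T (joinS T x y).
Proof.
move=> [A [C [hA hC hAC ->]]] [A' [C' [hA' hC' hAC' ->]]].
exists (A `|` A'), (C `|` C').
split; [exact: inF_setU | exact: inF_setU | exact: simF_setU |].
by unfold_triple; congr (_, _, _); set_tauto.
Qed.

Lemma bounded_sublattice_Bset : bounded_sublattice T (Bset T).
Proof.
split; [exact: Bset_inS | exact: Bset_botS | exact: Bset_topS |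
        exact: Bset_meetS | exact: Bset_joinS].
Qed.

Lemma distributive_Bset : distributive_in T (Bset T).
Proof.
move=> _ _ _ [A [C [_ _ _ ->]]] [A' [C' [_ _ _ ->]]] [A'' [C'' [_ _ _ ->]]].
by unfold_triple; congr (_, _, _); set_tauto.
Qed.

Lemma complemented_Bset : complemented_in T (Bset T).
Proof.
move=> _ [A [C [hA hC hAC ->]]].
exists (~` A, ~` A `&` ~` C, ~` C).
  by exists (~` A), (~` C); split; [exact: inF_setC | exact: inF_setC |
    exact: simF_setC |].
unfold_triple; rewrite !setUv; split; congr (_, _, _); set_tauto.
Qed.

Lemma boolean_Bset : boolean_in T (Bset T).
Proof. by split; [exact: distributive_Bset | exact: complemented_Bset]. Qed.

End BooleanB.

Section Maximality.
Variables (T : Type) (L : set (triple T)).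
Hypotheses (L_inS : L `<=` inS T) (Bset_L : Bset T `<=` L)
  (distributive_L : distributive_in T L).

(* If t is in Q but not in P, distributing (P, Q, R) over the top element
   ({t}, 0, 0) \/ (~{t}, ~{t}, T) writes it as a join of two triples whose first
   two components miss t, so that t is missing from Q as well. *)
Lemma distributive_t2_sub P Q R : L (P, Q, R) -> Q `<=` P.
Proof.
move=> Lx t Qt; have [//|nPt] := pselect (P t); exfalso.
have fin_t := finite_set1 t.
have Lb : L ([set t], [set t] `&` set0, set0).
  by apply: Bset_L; exists [set t], set0; split=> //; left;
    rewrite ?finite_set0.
have Lb' : L (~` [set t], ~` [set t] `&` setT, setT).
  by apply: Bset_L; exists (~` [set t]), setT; split=> //; right;
    rewrite ?setCK ?setCT.
have := distributive_L Lx Lb Lb'; rewrite joinS_setC_topS meetS_topS => x_eq.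
have : t2 T (P, Q, R) t by [].
rewrite x_eq; apply: joinS_t2_notin; rewrite /t1 /t2 /=.
- by case.
- by case=> _ [_ []].
- by case=> _; apply.
- by case=> _ [+ _]; apply.
Qed.

Lemma L_t2_setI P Q R : L (P, Q, R) -> Q = P `&` R.
Proof.
move=> Lx; have [_ _ _ [PQ_PR _] _] := L_inS Lx.
rewrite /t1 /t2 /t3 /= in PQ_PR.
by rewrite -PQ_PR (setIidr (distributive_t2_sub Lx)).
Qed.

Lemma L_finite_setD A C : L (A, A `&` C, C) -> finite_set (C `\` A).
Proof.
move=> LAC; have [_ _ _ _] := L_inS LAC; rewrite /t1 /t2 /t3 /= mu_setI_mid.
by apply: sub_finite_set => t [Ct nAt]; split=> // -[].
Qed.

Hypothesis T_infinite : ~ finite_set [set: T].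

Lemma L_not_finite_cofinite A C : L (A, A `&` C, C) ->
  finite_set A -> finite_set (~` C) -> False.
Proof.
move=> LAC fA cC; apply: T_infinite.
apply: sub_finite_set (_ : finite_set (A `|` ~` C `|` C `\` A)).
  move=> t _; have [At|nAt] := pselect (A t); first by left; left.
  by have [Ct|nCt] := pselect (C t); [right | left; right].
by rewrite !finite_setU; split=> //; exact: L_finite_setD.
Qed.

(* The complement (P, P `&` R, R) forces R to cover ~` C, while P is finite,
   being disjoint from the cofinite A. *)
Lemma L_not_cofinite_finite A C : complemented_in T L -> L (A, A `&` C, C) ->
  finite_set (~` A) -> finite_set C -> False.
Proof.
move=> complemented_L LAC cA fC; apply: T_infinite.
have [[[P Q] R] Ly [meet_bot join_top]] := complemented_L _ LAC.
have Q_eq := L_t2_setI Ly; subst Q.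
have AP0 : A `&` P = set0 := congr1 (t1 T) meet_bot.
have CR : C `|` R = setT.
  by have := congr1 (t3 T) join_top; unfold_triple => <-; set_tauto.
apply: sub_finite_set (_ : finite_set (C `|` ~` A `|` R `\` P)).
  move=> t _; have : (C `|` R) t by rewrite CR.
  case=> [Ct|Rt]; first by left; left.
  have [At|nAt] := pselect (A t); last by left; right.
  by right; split=> // Pt; move: (conj At Pt : (A `&` P) t); rewrite AP0.
by rewrite !finite_setU; split=> //; exact: L_finite_setD Ly.
Qed.

Lemma L_sub_Bset : complemented_in T L -> L `<=` Bset T.
Proof.
move=> complemented_L [[A Q] C] Lx; have Q_eq := L_t2_setI Lx; subst Q.
have [hA _ hC _ _] := L_inS Lx.
exists A, C; split=> //.
case: hA => [fA|cA]; case: hC => [fC|cC]; [by left | | | by right].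
- by case: (L_not_finite_cofinite Lx fA cC).
- by case: (L_not_cofinite_finite complemented_L Lx cA fC).
Qed.

End Maximality.

Theorem proposition5p6 (T : Type) (Tinf : ~ finite_set [set: T]) :
  (bounded_sublattice T (Bset T) /\ boolean_in T (Bset T)) /\
  (forall L : set (triple T),
      bounded_sublattice T L -> complemented_in T L ->
      Bset T `<=` L -> Bset T <> L ->
      ~ boolean_in T L).
Proof.
split; first by split; [exact: bounded_sublattice_Bset | exact: boolean_Bset].
move=> L [L_inS _ _ _ _] complemented_L Bset_L Bset_neq_L [distributive_L _].
apply: Bset_neq_L; apply/seteqP; split=> //.
exact: L_sub_Bset.
Qed.
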